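(* Let $n\ge 3$ and $\mathcal F=\{\{1,2\},\{2,3\},\dots,\{n-1,n\},\{n,1\}\}$. Then the building closure of $\mathcal F$ is $\mathrm{Con}(C_n)$, and $\mathcal F$ is tight. Consequently, in the description $$\Delta_{\mathcal F}=\sum_{i=1}^n[e_i,e_{i+1}]=\{x:\phi_{[n]}(x)=n,\ \phi_X(x)\ge|\mathcal F_X|\ \forall X\in\mathrm{Con}(C_n)\}$$ (with $e_{n+1}:=e_1$) all inequalities for $X\in\mathrm{Con}(C_n)\setminus\{[n]\}$ are irredundant.
   Context: $\mathrm{Con}(C_n)$ is the family of subsets of $[n]$ inducing connected subgraphs of the cycle graph $C_n$, i.e. $[n]$ together with all nonempty proper cyclic intervals $\{i,i+1,\dots,j\}$ (indices mod $n$); the nestohedron $\Delta_{\mathrm{Con}(C_n)}$ is the cyclohedron $W_n$. A building set on $[n]$ is a family of nonempty subsets containing all singletons and closed under unions of intersecting members; the building closure of $\mathcal F$ is the minimal building set containing it. $\mathcal F_X=\{F\in\mathcal F:F\subseteq X\}$, $\phi_X(x)=\sum_{i\in X}x_i$, $\Delta_F=\mathrm{Conv}\{e_i:i\in F\}$, $\Delta_{\mathcal F}=\sum_{F\in\mathcal F}\Delta_F$. A connected hypergraph $\mathcal F$ is tight if each inequality $\phi_X(x)\ge|\mathcal F_X|$, $X\in\widehat{\mathcal F}\setminus\{[n]\}$, in the description $\Delta_{\mathcal F}=\{x:\phi_{[n]}(x)=|\mathcal F|,\ \phi_X(x)\ge|\mathcal F_X|\ \forall X\in\widehat{\mathcal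 F}\}$ is irredundant. *)

(* Ground set [n] is modelled as 'I_n = {0,...,n-1};
   the cyclic successor i |-> i+1 (mod n) is ordS. *)
From HB Require Import structures.
From mathcomp Require Import all_boot all_order all_algebra.
Set Implicit Arguments. Unset Strict Implicit. Unset Printing Implicit Defensive.
Import Order.TTheory GRing.Theory Num.Theory.

Definition building_set (n : nat) (B : {set {set 'I_n}}) : bool :=
  [&& set0 \notin B,
      [forall i : 'I_n, [set i] \in B] &
      [forall A in B, forall C in B, (A :&: C != set0) ==> (A :|: C \in B)]].

Definition bclosure (n : nat) (F : {set {set 'I_n}}) : {set {set 'I_n}} :=
  \bigcap_(B : {set {set 'I_n}} | building_set B && (F \subset B)) B.

Definition cint (n : nat) (i : 'I_n) (k : nat) : {set 'I_n} :=
  [set iter t (@ordS n) i | t : 'I_k.+1].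

Definition Con (n : nat) : {set {set 'I_n}} :=
  [set A : {set 'I_n} | (A == setT)
     || [exists i : 'I_n, exists k : 'I_n, (A == cint i k) && (A != setT)]].

Definition cycleF (n : nat) : {set {set 'I_n}} :=
  [set [set i; ordS i] | i : 'I_n].

Definition restr (n : nat) (F : {set {set 'I_n}}) (X : {set 'I_n}) :=
  [set G in F | G \subset X].

Definition phi (R : numDomainType) (n : nat) (X : {set 'I_n}) (x : 'I_n -> R) : R :=
  (\sum_(i in X) x i)%R.

Definition irredundant (R : realFieldType) (n : nat) (F : {set {set 'I_n}})
    (c : R) (D : {set {set 'I_n}}) (X : {set 'I_n}) : Prop :=
  exists x : 'I_n -> R,
    [/\ phi setT x = c,
        (forall Y, Y \in D -> Y != X -> (#|restr F Y|%:R <= phi Y x)%R)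
      & (phi X x < #|restr F X|%:R)%R].

Definition tight (R : realFieldType) (n : nat) (F : {set {set 'I_n}}) : Prop :=
  forall X, X \in bclosure F -> X != setT ->
    irredundant F (#|F|%:R : R)%R (bclosure F) X.

From HB Require Import structures.
From mathcomp Require Import all_boot all_order all_algebra.
From mathcomp Require Import zify lra.

Import Order.TTheory GRing.Theory Num.Theory.

(* Cyclic intervals (arcs) form a building set: singletons are arcs and the
   union of two intersecting arcs is an arc, because one of them contains the
   starting point of the other.  Conversely, a building set containing the
   edges {i, i+1} contains every arc, grown one edge at a time.

   For tightness, an arc X = {a, ..., a+k} has |F_X| = |X| - 1, and every
   nonempty proper Y has |F_Y| <= |Y| - 1, since some i in Y has i+1 outside
   Y.  The point
     x = 1 + 3/4 (e_(a+k+1) + e_(a-1) - e_a - e_(a+k))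
   has coordinate sum n and gives phi_X(x) = |X| - 3/2.  A proper arc is
   determined by containing a and a+k but neither a-1 nor a+k+1, so every other
   arc Y gets phi_Y(x) >= |Y| - 3/4. *)

Lemma modn_lt_double m d : m < d + d -> m %% d = if m < d then m else m - d.
Proof.
case: ifP => [lt_md _|ge_md lt_m2d]; first by rewrite modn_small.
have -> : m = (m - d) + d by lia.
by rewrite modnDr modn_small; lia.
Qed.

Ltac case_modn m d := rewrite (@modn_lt_double m d); [case: ifP => ? | lia].

Section CyclicIntervals.

Variable n : nat.
Hypothesis n_gt2 : 2 < n.

Let n_gt0 : 0 < n. Proof. lia. Qed.

Definition cadd (a : 'I_n) (p : nat) : 'I_n := Ordinal (ltn_pmod (a + p) n_gt0).

Definition cdist (a j : 'I_n) : nat := (j + (n - a)) %% n.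

Lemma cdist_lt a j : cdist a j < n. Proof. exact: ltn_pmod. Qed.

Lemma caddK a p : p < n -> cdist a (cadd a p) = p.
Proof.
move=> lt_pn; rewrite /cdist /= modnDml.
have -> : a + p + (n - a) = p + n by have := ltn_ord a; lia.
by rewrite modnDr modn_small.
Qed.

Lemma cdistK a j : cadd a (cdist a j) = j.
Proof.
apply: val_inj; rewrite /= /cdist modnDmr.
have -> : a + (j + (n - a)) = j + n by have := ltn_ord a; lia.
by rewrite modnDr modn_small.
Qed.

Lemma cdist_cadd a b p : cdist b (cadd a p) = (cdist b a + p) %% n.
Proof. by rewrite /cdist /= !modnDml; congr (_ %% _); lia. Qed.

Lemma cdistii a : cdist a a = 0.
Proof. by rewrite /cdist subnKC ?modnn // ltnW. Qed.

Lemma cadd0 a : cadd a 0 = a.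
Proof. by apply: val_inj; rewrite /= addn0 modn_small. Qed.

Lemma ordS_cadd a p : ordS (cadd a p) = cadd a p.+1.
Proof. by apply: val_inj; rewrite /= -addn1 modnDml; congr (_ %% _); lia. Qed.

Lemma iter_ordS a t : iter t (@ordS n) a = cadd a t.
Proof. by elim: t => [|t IH] /=; rewrite ?cadd0 // IH ordS_cadd. Qed.

Lemma eq_cadd a j p : p < n -> (j == cadd a p) = (cdist a j == p).
Proof.
move=> lt_pn; apply/eqP/eqP => [->|<-]; first exact: caddK.
by rewrite cdistK.
Qed.

Lemma cdist_sym_mod a b : (cdist b a + cdist a b) %% n = 0.
Proof. by rewrite -cdist_cadd cdistK cdistii. Qed.

Lemma mem_cint a k j : k < n -> (j \in cint a k) = (cdist a j <= k).
Proof.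
move=> lt_kn; apply/imsetP/idP => [[t _ ->]|le_jk].
  by rewrite iter_ordS caddK; have := ltn_ord t; lia.
by exists (Ordinal (le_jk : cdist a j < k.+1)); rewrite // iter_ordS cdistK.
Qed.

Lemma mem_cint_rel a b l j :
  l < n -> (j \in cint b l) = ((cdist b a + cdist a j) %% n <= l).
Proof. by move=> lt_ln; rewrite mem_cint // -{1}(cdistK a j) cdist_cadd. Qed.

Lemma cint_full (a : 'I_n) : cint a n.-1 = setT.
Proof.
by apply/setP => j; rewrite inE mem_cint; [have := cdist_lt a j; lia | lia].
Qed.

Lemma cint0 (a : 'I_n) : cint a 0 = [set a].
Proof. by apply/setP => j; rewrite inE mem_cint // leqn0 -eq_cadd // cadd0. Qed.

Lemma cint1 (a : 'I_n) : cint a 1 = [set a; ordS a].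
Proof.
apply/setP => j; rewrite !inE mem_cint; last lia.
rewrite -[X in j == X](cadd0 a) -[X in ordS X](cadd0 a) ordS_cadd !eq_cadd; lia.
Qed.

Lemma cintS (a : 'I_n) k : k.+1 < n ->
  cint a k.+1 = cint a k :|: [set cadd a k; ordS (cadd a k)].
Proof.
move=> lt_kn; apply/setP => j.
by rewrite !inE !mem_cint ?ordS_cadd ?eq_cadd; lia.
Qed.

Lemma cint_Con (a : 'I_n) k : k < n -> cint a k \in Con n.
Proof.
move=> lt_kn; rewrite inE; case: eqP => //= /eqP ne_setT.
by apply/existsP; exists a; apply/existsP; exists (Ordinal lt_kn); rewrite eqxx.
Qed.

Lemma ConP X : reflect (exists a k, k < n /\ X = cint a k) (X \in Con n).
Proof.
apply: (iffP idP) => [|[a [k [lt_kn ->]]]]; last exact: cint_Con.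
rewrite inE => /orP [/eqP ->|/existsP [a /existsP [k /andP [/eqP -> _]]]].
  by exists (Ordinal n_gt0), n.-1; rewrite cint_full; split; first lia.
by exists a, k.
Qed.

Lemma cint_meet_start (a b : 'I_n) k l : k < n -> l < n ->
  cint a k :&: cint b l != set0 -> b \in cint a k \/ a \in cint b l.
Proof.
move=> lt_kn lt_ln /set0Pn [j]; rewrite inE (mem_cint a) // (mem_cint_rel a) //.
rewrite !mem_cint // => /andP [le_jk le_jl].
have aj := cdist_lt a j; have ab := cdist_lt a b; have ba := cdist_lt b a.
move: (cdist_sym_mod a b) le_jl; case_modn (cdist b a + cdist a b) n;
  case_modn (cdist b a + cdist a j) n; lia.
Qed.

Lemma cintU (a b : 'I_n) k l : k < n -> l < n -> b \in cint a k ->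
  cint a k :|: cint b l = cint a (minn n.-1 (maxn k (cdist a b + l))).
Proof.
move=> lt_kn lt_ln; rewrite mem_cint // => le_bk; apply/setP => j.
rewrite !inE (mem_cint_rel a b) // (mem_cint a) // mem_cint; last lia.
have aj := cdist_lt a j; have ab := cdist_lt a b; have ba := cdist_lt b a.
move: (cdist_sym_mod a b); case_modn (cdist b a + cdist a b) n;
  case_modn (cdist b a + cdist a j) n; move=> sym; apply/orP/idP; lia.
Qed.

Lemma cintU_Con (a b : 'I_n) k l : k < n -> l < n ->
  cint a k :&: cint b l != set0 -> cint a k :|: cint b l \in Con n.
Proof.
move=> lt_kn lt_ln /(cint_meet_start _ _ _ _ lt_kn lt_ln) [b_in|a_in].
  by rewrite cintU // cint_Con //; lia.
by rewrite setUC cintU // cint_Con //; lia.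
Qed.

Lemma cint_eq_of_ends (a b : 'I_n) k l : k.+1 < n -> l < n.-1 ->
  a \in cint b l -> cadd a k \in cint b l ->
  cadd a k.+1 \notin cint b l -> cadd a n.-1 \notin cint b l ->
  cint b l = cint a k.
Proof.
move=> lt_kn lt_ln; rewrite -{1}(cadd0 a) !mem_cint ?cdist_cadd; try lia.
move=> a_in ak_in akS_out a1_out; apply/setP => j.
rewrite (mem_cint_rel a) ?(mem_cint a); try lia.
have aj := cdist_lt a j; have ba := cdist_lt b a.
move: a_in ak_in akS_out a1_out.
case_modn (cdist b a + 0) n; case_modn (cdist b a + k) n;
  case_modn (cdist b a + k.+1) n; case_modn (cdist b a + n.-1) n;
  case_modn (cdist b a + cdist a j) n; move=> *; apply/idP/idP; lia.
Qed.

Lemma Con_building : building_set (Con n).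
Proof.
apply/and3P; split.
- apply/negP => /ConP [a [k [lt_kn /setP /(_ a)]]].
  by rewrite inE mem_cint // cdistii.
- by apply/forallP => i; rewrite -cint0 cint_Con.
- apply/forallP => A; apply/implyP => /ConP [a [k [lt_kn ->]]].
  apply/forallP => C; apply/implyP => /ConP [b [l [lt_ln ->]]].
  by apply/implyP; apply: cintU_Con.
Qed.

Lemma cycleF_sub_Con : cycleF n \subset Con n.
Proof.
by apply/subsetP => G /imsetP [i _ ->]; rewrite -cint1 cint_Con //; lia.
Qed.

Lemma Con_sub_building B :
  building_set B -> cycleF n \subset B -> Con n \subset B.
Proof.
case/and3P => _ /forallP B_single /forallP B_union F_sub_B.
apply/subsetP => X /ConP [a [k [+ ->]]].
elim: k => [|k IH] lt_kn; first by rewrite cint0.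
have edge_in : [set cadd a k; ordS (cadd a k)] \in B.
  by apply: (subsetP F_sub_B); apply/imsetP; exists (cadd a k).
rewrite cintS //.
have /implyP/(_ (IH (ltnW lt_kn)))/forallP/(_ _)/implyP/(_ edge_in)/implyP :=
  B_union (cint a k).
apply; apply/set0Pn; exists (cadd a k); rewrite !inE eqxx mem_cint; last lia.
by rewrite caddK; lia.
Qed.

Lemma bclosure_cycleF : bclosure (cycleF n) = Con n.
Proof.
apply/eqP; rewrite eqEsubset; apply/andP; split.
  by apply: bigcap_inf; rewrite Con_building cycleF_sub_Con.
by apply/bigcapsP => B /andP [B_building F_sub_B]; apply: Con_sub_building.
Qed.

Definition edge_starts (Y : {set 'I_n}) := [set i in Y | ordS i \in Y].

Lemma edge_inj : injective (fun i : 'I_n => [set i; ordS i]).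
Proof.
move=> i j /= eq_ij.
have : i \in [set j; ordS j] by rewrite -eq_ij set21.
have : j \in [set i; ordS i] by rewrite eq_ij set21.
rewrite !inE => /orP [/eqP -> //|/eqP j_Si] /orP [/eqP -> //|/eqP i_Sj].
have : i = cadd i 2 by rewrite -ordS_cadd -ordS_cadd cadd0 -j_Si.
by move/eqP; rewrite eq_cadd ?cdistii //; lia.
Qed.

Lemma card_cycleF : #|cycleF n| = n.
Proof. by rewrite card_imset ?card_ord //; exact: edge_inj. Qed.

Lemma card_restr_cycleF Y : #|restr (cycleF n) Y| = #|edge_starts Y|.
Proof.
suff -> : restr (cycleF n) Y = [set [set i; ordS i] | i in edge_starts Y].
  by rewrite card_imset //; exact: edge_inj.
apply/setP => G.
rewrite inE; apply/andP/imsetP => [[/imsetP [i _ ->] sub_Y]|[i]].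
  by exists i; rewrite // inE !(subsetP sub_Y) ?set21 ?set22.
rewrite inE => /andP [i_in Si_in] ->; split; first exact: imset_f.
by apply/subsetP => j; rewrite !inE => /orP [] /eqP ->.
Qed.

Lemma card_edge_starts_lt (Y : {set 'I_n}) :
  Y != set0 -> Y != setT -> #|edge_starts Y| < #|Y|.
Proof.
move=> /set0Pn [y y_in] ne_setT; apply: proper_card; apply/properP; split.
  by apply/subsetP => i; rewrite inE => /andP [].
case: (pickP [pred i | (i \in Y) && (ordS i \notin Y)]) =>
  [i /andP [i_in Si_out]|closed].
  by exists i; rewrite // inE (negbTE Si_out) andbF.
exfalso; move/negP: ne_setT; apply; apply/eqP/setP => j.
rewrite inE -(cdistK y j).
elim: (cdist y j) => [|t IH]; first by rewrite cadd0.
by move: (closed (cadd y t)); rewrite /= IH ordS_cadd => /negbFE.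
Qed.

Lemma card_cint_le (a : 'I_n) k : k < n ->
  #|cint a k| <= #|edge_starts (cint a k)|.+1.
Proof.
move=> lt_kn; rewrite (cardsD1 (cadd a k)) addnC -addn1 leq_add ?leq_b1 //.
apply: subset_leq_card; apply/subsetP => i.
rewrite !inE -[X in ordS X](cdistK a i) ordS_cadd !mem_cint // eq_cadd //.
by move=> /andP [ne_ik le_ik]; rewrite caddK; lia.
Qed.

Variable R : realFieldType.
Local Open Scope ring_scope.

Definition witness (a : 'I_n) (k : nat) (j : 'I_n) : R :=
  1 + 3 / 4 * ((j == cadd a k.+1)%:R + (j == cadd a n.-1)%:R
               - (j == cadd a 0)%:R - (j == cadd a k)%:R).

Lemma phi_witness a k Y : phi Y (witness a k) = #|Y|%:R + 3 / 4 *
  ((cadd a k.+1 \in Y)%:R + (cadd a n.-1 \in Y)%:R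
   - (cadd a 0 \in Y)%:R - (cadd a k \in Y)%:R).
Proof.
have sum_eq c : \sum_(j in Y) ((j == c)%:R : R) = (c \in Y)%:R.
  have [c_in|c_out] := boolP (c \in Y).
    by rewrite (bigD1 c) //= eqxx big1 ?addr0 // => j /andP [_ /negbTE ->].
  by rewrite big1 // => j j_in; case: eqP j_in => // ->; rewrite (negbTE c_out).
rewrite /phi /witness big_split /= sumr_const -mulr_sumr !sumrB big_split /=.
by rewrite !sum_eq.
Qed.

Lemma witness_sum a k : phi setT (witness a k) = n%:R.
Proof. by rewrite phi_witness !in_setT cardsT card_ord; lra. Qed.

Lemma witness_violates a k : (k.+1 < n)%N ->
  phi (cint a k) (witness a k) < #|restr (cycleF n) (cint a k)|%:R.
Proof.
move=> lt_kn; have := card_cint_le a k (ltnW lt_kn).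
rewrite phi_witness card_restr_cycleF -(ler_nat R) -addn1 natrD.
rewrite !mem_cint ?caddK; try lia.
have [-> ->] : (k.+1 <= k)%N = false /\ (n.-1 <= k)%N = false by split; lia.
by rewrite leqnn leq0n /=; lra.
Qed.

Lemma witness_satisfies a k Y : (k.+1 < n)%N -> Y \in Con n -> Y != cint a k ->
  #|restr (cycleF n) Y|%:R <= phi Y (witness a k).
Proof.
move=> lt_kn /ConP [b [l [lt_ln ->]]] ne_X.
rewrite card_restr_cycleF phi_witness.
have [->|ne_setT] := eqVneq (cint b l) setT.
  have := max_card (edge_starts setT).
  by rewrite !in_setT cardsT -(ler_nat R); lra.
have lt_ln1 : (l < n.-1)%N.
  rewrite ltn_neqAle -ltnS prednK // lt_ln andbT.
  by apply: contraNneq ne_setT => ->; rewrite cint_full.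
have : (#|edge_starts (cint b l)| + 1 <= #|cint b l|)%N.
  rewrite addn1 card_edge_starts_lt //.
  by apply/set0Pn; exists b; rewrite mem_cint // cdistii.
rewrite -(ler_nat R) natrD.
have not_ends : ~~ [&& a \in cint b l, cadd a k \in cint b l,
                     cadd a k.+1 \notin cint b l & cadd a n.-1 \notin cint b l].
  apply/and4P => [[a_in ak_in akS_out a1_out]]; move/eqP: ne_X; apply.
  exact: cint_eq_of_ends.
move: not_ends; rewrite cadd0.
by case: (a \in _); case: (cadd a k \in _); case: (cadd a k.+1 \in _);
  case: (cadd a n.-1 \in _) => //= _; lra.
Qed.

Lemma irredundant_cycleF X : X \in Con n -> X != setT ->
  irredundant (cycleF n) (n%:R : R) (Con n) X.
Proof.
move=> /ConP [a [k [lt_kn ->]]] ne_setT.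
have lt_kn1 : (k.+1 < n)%N.
  rewrite ltn_neqAle lt_kn andbT; apply: contraNneq ne_setT => eq_kn.
  by rewrite (_ : k = n.-1) ?cint_full //; lia.
exists (witness a k); split.
- exact: witness_sum.
- by move=> Y; apply: witness_satisfies.
- exact: witness_violates.
Qed.

End CyclicIntervals.

Theorem mainTheorem9 (R : realFieldType) (n : nat) (hn : 3 <= n) :
  [/\ bclosure (cycleF n) = Con n,
      tight R (cycleF n)
    & forall X, X \in Con n -> X != setT ->
        irredundant (cycleF n) (n%:R : R) (Con n) X].
Proof.
have closure_eq := bclosure_cycleF n hn.
split=> //; last exact: irredundant_cycleF.
by move=> X; rewrite closure_eq card_cycleF //; exact: irredundant_cycleF.
Qed.
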